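(* Assume $a/b>\sqrt{2}$. Every self-intersected 4-periodic of the elliptic billiard $x^2/a^2+y^2/b^2=1$ has perimeter $$L=\frac{4a^2}{c},\qquad c^2=a^2-b^2.$$ In particular the perimeter is the same for all members of the family.
   Context: The elliptic billiard is the ellipse $\mathcal{E}: x^2/a^2+y^2/b^2=1$ with $a>b>0$. Let $c=\sqrt{a^2-b^2}$; the foci are $f_{1}=(-c,0)$ and $f_{2}=(c,0)$. An $N$-periodic is a closed billiard trajectory with $N$ bounces $P_1,\dots,P_N\in\mathcal{E}$: at each $P_i$ the normal to $\mathcal{E}$ bisects the angle between the segments $P_{i-1}P_i$ and $P_iP_{i+1}$ (indices mod $N$). All segments of such a trajectory are tangent to a fixed conic confocal with $\mathcal{E}$ (the caustic). Self-intersected 4-periodics: for $a/b>\sqrt2$ these are the 4-periodics whose caustic is the confocal hyperbola $x^2/a''^2-y^2/b''^2=1$ with $a''=a\sqrt{a^2-2b^2}/c$ and $b''=b^2/c$. They form a one-parameter family which can be parametrized by $u$ with $|u|\le u_{\max}:=\frac{a}{c^2}\sqrt{a^2-2b^2}$ via $P_1=(au,\,b\sqrt{1-u^2})$, $P_3=(-au,\,b\sqrt{1-u^2})$, $P_2=\left(-\frac{a\sqrt{a^2(a^2-2b^2)-c^4u^2}}{c^2\sqrt{1-u^2}},\,-\frac{b^3}{c^2\sqrt{1-u^2}}\right)$, $P_4=\left(\frac{a\sqrt{a^2(a^2-2b^2)-c^4u^2}}{c^2\sqrt{1-u^2}},\,-\frac{b^3}{c^2\sqrt{1-u^2}}\right)$.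 The perimeter is $|P_1P_2|+|P_2P_3|+|P_3P_4|+|P_4P_1|$. *)

From Stdlib Require Import Reals Lra.
Open Scope R_scope.

Definition dist (P Q : R * R) : R :=
  sqrt ((fst P - fst Q) ^ 2 + (snd P - snd Q) ^ 2).

Definition cfoc (a b : R) : R := sqrt (a ^ 2 - b ^ 2).

Definition umax (a b : R) : R :=
  a / (cfoc a b) ^ 2 * sqrt (a ^ 2 - 2 * b ^ 2).

(* The parametrization of the self-intersected 4-periodics (paper's formulas). *)
Definition P1 (a b u : R) : R * R := (a * u, b * sqrt (1 - u ^ 2)).
Definition P3 (a b u : R) : R * R := (- (a * u), b * sqrt (1 - u ^ 2)).
Definition P2 (a b u : R) : R * R :=
  (- (a * sqrt (a ^ 2 * (a ^ 2 - 2 * b ^ 2) - (cfoc a b) ^ 4 * u ^ 2))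
      / ((cfoc a b) ^ 2 * sqrt (1 - u ^ 2)),
   - (b ^ 3) / ((cfoc a b) ^ 2 * sqrt (1 - u ^ 2))).
Definition P4 (a b u : R) : R * R :=
  ((a * sqrt (a ^ 2 * (a ^ 2 - 2 * b ^ 2) - (cfoc a b) ^ 4 * u ^ 2))
      / ((cfoc a b) ^ 2 * sqrt (1 - u ^ 2)),
   - (b ^ 3) / ((cfoc a b) ^ 2 * sqrt (1 - u ^ 2))).

Definition perimeter4 (a b u : R) : R :=
  dist (P1 a b u) (P2 a b u) + dist (P2 a b u) (P3 a b u)
  + dist (P3 a b u) (P4 a b u) + dist (P4 a b u) (P1 a b u).

(** With [s = sqrt (1 - u^2)] and [w = sqrt (a^2 (a^2 - 2 b^2) - c^4 u^2)], the
    side [P1 P2] has length [(a^2 s + u w) / (c s)].  The reflection [x |-> -x]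
    swaps [P1] with [P3] and [P2] with [P4] and turns [u] into [-u], so [P3 P4]
    has the same length as [P1 P2] while [P2 P3] and [P4 P1] have length
    [(a^2 s - u w) / (c s)].  The [u w] terms cancel and the perimeter is
    [4 a^2 s / (c s) = 4 a^2 / c]. *)

From Stdlib Require Import Reals Lra Psatz.
Open Scope R_scope.

Definition mirror (P : R * R) : R * R := (- fst P, snd P).

Lemma dist_sym (P Q : R * R) : dist P Q = dist Q P.
Proof. unfold dist; f_equal; ring. Qed.

Lemma dist_mirror (P Q : R * R) : dist (mirror P) (mirror Q) = dist P Q.
Proof. unfold dist, mirror; cbn [fst snd]; f_equal; ring. Qed.

Lemma sqr_opp (u : R) : (- u) ^ 2 = u ^ 2.
Proof. ring. Qed.

Lemma mirror_P1 (a b u : R) : mirror (P1 a b u) = P3 a b u.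
Proof. reflexivity. Qed.

Lemma mirror_P2 (a b u : R) : mirror (P2 a b u) = P4 a b u.
Proof. unfold mirror, P2, P4; cbn [fst snd]; f_equal; unfold Rdiv; ring. Qed.

Lemma P3_eq_P1_opp (a b u : R) : P3 a b u = P1 a b (- u).
Proof. unfold P3, P1; rewrite sqr_opp; f_equal; ring. Qed.

Lemma P2_opp (a b u : R) : P2 a b (- u) = P2 a b u.
Proof. unfold P2; rewrite sqr_opp; reflexivity. Qed.

Lemma mirror_P1_opp (a b u : R) : mirror (P1 a b (- u)) = P1 a b u.
Proof. rewrite mirror_P1, P3_eq_P1_opp, Ropp_involutive; reflexivity. Qed.

Lemma perimeter4_sides (a b u : R) :
  perimeter4 a b u
  = 2 * (dist (P1 a b u) (P2 a b u) + dist (P1 a b (- u)) (P2 a b (- u))).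
Proof.
  assert (H23 : dist (P2 a b u) (P3 a b u) = dist (P1 a b (- u)) (P2 a b (- u))).
  { rewrite dist_sym, P3_eq_P1_opp, P2_opp; reflexivity. }
  assert (H34 : dist (P3 a b u) (P4 a b u) = dist (P1 a b u) (P2 a b u)).
  { rewrite <- mirror_P1, <- mirror_P2, dist_mirror; reflexivity. }
  assert (H41 : dist (P4 a b u) (P1 a b u) = dist (P1 a b (- u)) (P2 a b (- u))).
  { rewrite dist_sym, <- mirror_P1_opp, <- mirror_P2, <- P2_opp, dist_mirror.
    reflexivity. }
  unfold perimeter4; rewrite H23, H34, H41; ring.
Qed.

Lemma side_sqr_poly (a b c s u w : R) :
  u ^ 2 = 1 - s ^ 2 -> a ^ 2 = c ^ 2 + b ^ 2 -> w ^ 2 = c ^ 4 * s ^ 2 - b ^ 4 ->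
  a ^ 2 * (u * c ^ 2 * s + w) ^ 2 + b ^ 2 * (c ^ 2 * s ^ 2 + b ^ 2) ^ 2
  = c ^ 2 * (a ^ 2 * s + u * w) ^ 2.
Proof.
  intros Hu Ha Hw.
  (* the mixed terms [u w] agree on both sides; the rest only involves [u^2], [w^2] *)
  transitivity (a ^ 2 * u ^ 2 * c ^ 4 * s ^ 2 + a ^ 2 * w ^ 2
                + b ^ 2 * (c ^ 2 * s ^ 2 + b ^ 2) ^ 2 - c ^ 2 * u ^ 2 * w ^ 2
                + c ^ 2 * (a ^ 2 * s + u * w) ^ 2 - c ^ 2 * (a ^ 2) ^ 2 * s ^ 2); [ring|].
  rewrite Hw, Hu, Ha; ring.
Qed.

Lemma side_sqr (a b c s u w : R) :
  0 < c -> 0 < s ->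
  u ^ 2 = 1 - s ^ 2 -> a ^ 2 = c ^ 2 + b ^ 2 -> w ^ 2 = c ^ 4 * s ^ 2 - b ^ 4 ->
  (a * u - - (a * w) / (c ^ 2 * s)) ^ 2 + (b * s - - b ^ 3 / (c ^ 2 * s)) ^ 2
  = ((a ^ 2 * s + u * w) / (c * s)) ^ 2.
Proof.
  intros Hc Hs Hu Ha Hw.
  transitivity ((a ^ 2 * (u * c ^ 2 * s + w) ^ 2 + b ^ 2 * (c ^ 2 * s ^ 2 + b ^ 2) ^ 2)
                / (c ^ 4 * s ^ 2)); [field; lra|].
  rewrite (side_sqr_poly a b c s u w Hu Ha Hw); field; lra.
Qed.

Lemma add_nonneg_of_sqr_le (x y : R) : 0 <= x -> y ^ 2 <= x ^ 2 -> 0 <= x + y.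
Proof. intros Hx Hy; nra. Qed.

Lemma two_sqr_lt_of_ratio (a b : R) : 0 < b -> a / b > sqrt 2 -> 2 * b ^ 2 < a ^ 2.
Proof.
  intros Hb Hr.
  assert (Ha : sqrt 2 * b < a).
  { apply (Rmult_lt_compat_r b) in Hr; [|exact Hb].
    unfold Rdiv in Hr; rewrite Rmult_assoc, Rinv_l in Hr; lra. }
  assert (H2 : sqrt 2 ^ 2 = 2) by (apply pow2_sqrt; lra).
  assert (0 < sqrt 2 * b) by (apply Rmult_lt_0_compat; [apply sqrt_lt_R0|]; lra).
  assert (Hsq : (sqrt 2 * b) ^ 2 < a ^ 2) by nra.
  rewrite Rpow_mult_distr, H2 in Hsq; exact Hsq.
Qed.

Lemma cfoc_sqr (a b : R) : b ^ 2 <= a ^ 2 -> cfoc a b ^ 2 = a ^ 2 - b ^ 2.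
Proof. intros H; unfold cfoc; apply pow2_sqrt; lra. Qed.

Lemma cfoc_pos (a b : R) : b ^ 2 < a ^ 2 -> 0 < cfoc a b.
Proof. intros H; unfold cfoc; apply sqrt_lt_R0; lra. Qed.

Lemma umax_sqr_bound (a b u : R) :
  0 < b -> 2 * b ^ 2 < a ^ 2 -> Rabs u <= umax a b ->
  cfoc a b ^ 4 * u ^ 2 <= a ^ 2 * (a ^ 2 - 2 * b ^ 2).
Proof.
  intros Hb Hab Hu; unfold umax in Hu.
  set (c := cfoc a b) in *.
  set (q := sqrt (a ^ 2 - 2 * b ^ 2)) in *.
  assert (Hc : 0 < c) by (apply cfoc_pos; nra).
  assert (Hq : q ^ 2 = a ^ 2 - 2 * b ^ 2) by (apply pow2_sqrt; lra).
  assert (Hc2 : 0 < c ^ 2) by nra.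
  assert (Hcu : c ^ 2 * Rabs u <= Rabs a * q).
  { apply (Rmult_le_compat_l (c ^ 2)) in Hu; [|lra].
    replace (c ^ 2 * (a / c ^ 2 * q)) with (a * q) in Hu by (field; lra).
    assert (0 <= q) by apply sqrt_pos.
    pose proof (Rle_abs a); nra. }
  assert (Hsq : (c ^ 2 * Rabs u) ^ 2 <= (Rabs a * q) ^ 2).
  { pose proof (Rabs_pos u); apply pow_incr; nra. }
  rewrite Rpow_mult_distr, Rpow_mult_distr, !pow2_abs, Hq in Hsq.
  replace (c ^ 4) with ((c ^ 2) ^ 2) by ring; exact Hsq.
Qed.

Lemma sqr_lt_1_of_umax (a b u : R) :
  0 < b -> 2 * b ^ 2 < a ^ 2 -> Rabs u <= umax a b -> u ^ 2 < 1.
Proof.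
  intros Hb Hab Hu.
  pose proof (umax_sqr_bound a b u Hb Hab Hu) as Hcu.
  assert (Hc4 : cfoc a b ^ 4 = (a ^ 2 - b ^ 2) ^ 2) by (rewrite <- cfoc_sqr by nra; ring).
  rewrite Hc4 in Hcu.
  assert (0 < b ^ 4) by (apply pow_lt; lra).
  nra.
Qed.

Lemma dist_P1_P2 (a b u : R) :
  0 < b -> 2 * b ^ 2 < a ^ 2 -> Rabs u <= umax a b ->
  dist (P1 a b u) (P2 a b u)
  = (a ^ 2 * sqrt (1 - u ^ 2)
     + u * sqrt (a ^ 2 * (a ^ 2 - 2 * b ^ 2) - cfoc a b ^ 4 * u ^ 2))
    / (cfoc a b * sqrt (1 - u ^ 2)).
Proof.
  intros Hb Hab Hu.
  pose proof (umax_sqr_bound a b u Hb Hab Hu) as Hcu.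
  pose proof (sqr_lt_1_of_umax a b u Hb Hab Hu) as Hu1.
  set (c := cfoc a b) in *.
  assert (Hc : 0 < c) by (apply cfoc_pos; nra).
  assert (Hc2 : c ^ 2 = a ^ 2 - b ^ 2) by (apply cfoc_sqr; nra).
  set (s := sqrt (1 - u ^ 2)).
  assert (Hs : 0 < s) by (apply sqrt_lt_R0; lra).
  assert (Hs2 : s ^ 2 = 1 - u ^ 2) by (apply pow2_sqrt; lra).
  set (w := sqrt (a ^ 2 * (a ^ 2 - 2 * b ^ 2) - c ^ 4 * u ^ 2)).
  assert (Hw2 : w ^ 2 = c ^ 4 * s ^ 2 - b ^ 4).
  { unfold w; rewrite pow2_sqrt by lra.
    replace (c ^ 4) with ((c ^ 2) ^ 2) by ring; rewrite Hs2, Hc2; ring. }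
  assert (Hw_le : w ^ 2 <= (a ^ 2 * s) ^ 2).
  { assert (Hcs : (c ^ 2 * s) ^ 2 <= (a ^ 2 * s) ^ 2).
    { apply pow_incr; split; [nra|].
      apply Rmult_le_compat_r; [lra|]; pose proof (pow2_ge_0 b); lra. }
    assert (0 <= b ^ 4) by (apply pow_le; lra).
    rewrite Hw2; replace (c ^ 4 * s ^ 2) with ((c ^ 2 * s) ^ 2) by ring; lra. }
  assert (Hnum : 0 <= a ^ 2 * s + u * w).
  { apply add_nonneg_of_sqr_le; [nra|].
    rewrite Rpow_mult_distr; nra. }
  unfold dist, P1, P2; cbn [fst snd]; fold c s w.
  rewrite (side_sqr a b c s u w Hc Hs) by lra.
  apply sqrt_pow2.
  apply Rmult_le_pos; [exact Hnum|].
  left; apply Rinv_0_lt_compat, Rmult_lt_0_compat; assumption.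
Qed.

Theorem mainTheorem1 (a b u : R) :
  0 < b -> b < a -> a / b > sqrt 2 ->
  Rabs u <= umax a b ->
  perimeter4 a b u = 4 * a ^ 2 / cfoc a b.
Proof.
  intros Hb Hab Hr Hu.
  pose proof (two_sqr_lt_of_ratio a b Hb Hr) as H2b.
  assert (Hu' : Rabs (- u) <= umax a b) by (rewrite Rabs_Ropp; exact Hu).
  assert (Hc : 0 < cfoc a b) by (apply cfoc_pos; nra).
  assert (Hs : 0 < sqrt (1 - u ^ 2)).
  { apply sqrt_lt_R0; pose proof (sqr_lt_1_of_umax a b u Hb H2b Hu); lra. }
  rewrite perimeter4_sides, (dist_P1_P2 a b u), (dist_P1_P2 a b (- u)), !sqr_opp
    by assumption.
  field; lra.
Qed.
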